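(* Let $\tilde q=q^2$. For all integers $v\geq 1$ and $L\geq 0$, \[ \sum_{n_1,\ldots,n_v\geq 0} \frac{\tilde q^{\sum_{i=1}^v N_i(N_i+1)}}{(\tilde q)_{n_1}\cdots(\tilde q)_{n_{v-1}}(\tilde q)_{2n_v+1}}\cdot\frac{(q^3;q^6)_{n_v}}{(q;q^2)_{n_v}}\cdot\frac{(\tilde q)_{2L+1}}{(\tilde q)_{L-N_1}} =\sum_{j=-\infty}^{\infty} (-1)^j q^{(2v+1)j^2+2vj}\left(\frac{j+1}{3}\right){2L+1 \brack L-j}_{\tilde q}, \] where $N_i=n_i+n_{i+1}+\cdots+n_v$ for $i=1,\ldots,v$ (for $v=1$ the product $(\tilde q)_{n_1}\cdots(\tilde q)_{n_{v-1}}$ is empty).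
   Context: For a variable $a$ and integer $n\ge 0$, $(a;q)_n=(1-a)(1-aq)\cdots(1-aq^{n-1})$, and $(\tilde q)_n=(\tilde q;\tilde q)_n$; by convention $1/(\tilde q)_n=0$ for negative integers $n$. The $q$-binomial coefficient in base $\tilde q$ is ${A \brack B}_{\tilde q}=\frac{(\tilde q;\tilde q)_A}{(\tilde q;\tilde q)_B(\tilde q;\tilde q)_{A-B}}$ if $0\le B\le A$ are integers, and $0$ otherwise. $\left(\frac{j}{3}\right)$ is the Legendre symbol modulo 3: it equals $1$ if $j\equiv 1 \pmod 3$, $-1$ if $j\equiv -1\pmod 3$, and $0$ if $3\mid j$. *)

From HB Require Import structures.
From mathcomp Require Import all_boot all_order all_algebra.
Set Implicit Arguments. Unset Strict Implicit. Unset Printing Implicit Defensive.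
Import Order.TTheory GRing.Theory Num.Theory.
Local Open Scope ring_scope.

Definition qpoch {R : ringType} (a q : R) (n : nat) : R :=
  \prod_(k < n) (1 - a * q ^+ k).

Definition qfac {R : ringType} (q : R) (n : nat) : R := qpoch q q n.

Definition invqfac {R : unitRingType} (q : R) (n : int) : R :=
  if (n < 0)%R then 0 else (qfac q `|n|%N)^-1.

Definition qbinom {R : unitRingType} (q : R) (A B : int) : R :=
  if (0 <= B) && (B <= A) then
    qfac q `|A|%N / (qfac q `|B|%N * qfac q `|A - B|%N)
  else 0.

Definition leg3 {R : ringType} (j : int) : R :=
  if (j %% 3)%Z == 1 then 1 else if (j %% 3)%Z == 2 then -1 else 0.

(** Write p = q^2, D_L(j) = 1/((p)_(L-j) (p)_(L+j+1)) and
    alpha_v(j) = (-1)^j q^((2v+1)j^2+2vj) ((j+1)/3), so that the right-hand side is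
    (p)_(2L+1) sum_j alpha_v(j) D_L(j).
    For v = 0 the sums f_L = sum_j eps_j q^(j^2) [2L+1, L-j]_p and g_L (the same with
    eps_(j-1)), where eps_j = (-1)^j ((j+1)/3), satisfy a coupled first-order recurrence
    coming from the q-Pascal rule and eps_(j+1) = eps_j - eps_(j-1); its solution is
    f_L = prod_(k<L) (1 + q^(2k+1) + q^(4k+2)) = (q^3;q^6)_L / (q;q^2)_L.
    Since alpha_(v+1)(j) = p^(j(j+1)) alpha_v(j), the Bailey lemma
    sum_(M<=L) p^(M(M+1)) D_M(j) / (p)_(L-M) = p^(j(j+1)) D_L(j)
    turns sum_j alpha_v(j) D_L(j) into the Bailey chain
    beta_(v+1)(L) = sum_(M<=L) p^(M(M+1)) beta_v(M) / (p)_(L-M), and unfolding this chain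
    v times gives the multiple sum on the left. *)

From HB Require Import structures.
From mathcomp Require Import all_boot all_order all_algebra.
From mathcomp Require Import zify ring.
Import Order.TTheory GRing.Theory Num.Theory.
Set Implicit Arguments. Unset Strict Implicit. Unset Printing Implicit Defensive.
Local Open Scope ring_scope.

Section WindowSums.
Variable R : pzRingType.

Definition zsum (N : nat) (F : int -> R) : R :=
  \sum_(0 <= k < 2 * N) F (k%:Z - N%:Z).

Definition supported_in (N : nat) (F : int -> R) : Prop :=
  forall j : int, (j < - N%:Z) || (N%:Z <= j) -> F j = 0.

Lemma eq_zsum N F G : F =1 G -> zsum N F = zsum N G.
Proof. by move=> eqFG; apply: eq_bigr => k _; rewrite eqFG. Qed.

Lemma zsumD N F G : zsum N (fun j => F j + G j) = zsum N F + zsum N G.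
Proof. exact: big_split. Qed.

Lemma zsumB N F G : zsum N (fun j => F j - G j) = zsum N F - zsum N G.
Proof. exact: sumrB. Qed.

Lemma zsumZ N c F : zsum N (fun j => c * F j) = c * zsum N F.
Proof. by rewrite /zsum mulr_sumr. Qed.

Lemma zsum1 F : zsum 1 F = F (-1) + F 0.
Proof. by rewrite /zsum (_ : (2 * 1 = 2)%N) // big_nat_recl // big_nat1. Qed.

Lemma zsumS N F : supported_in N F -> zsum N.+1 F = zsum N F.
Proof.
move=> F0; rewrite /zsum (_ : (2 * N.+1 = (2 * N).+2)%N); last lia.
rewrite big_nat_recl // big_nat_recr //= F0; last by apply/orP; left; lia.
rewrite (F0 (_ - _)); last by apply/orP; right; lia.
by rewrite add0r addr0; apply: eq_bigr => k _; congr F; lia.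
Qed.

Lemma zsum_widen N M F : supported_in N F -> (N <= M)%N -> zsum M F = zsum N F.
Proof.
move=> F0; elim: M => [|M IHM]; first by rewrite leqn0 => /eqP ->.
rewrite leq_eqVlt => /orP[/eqP -> //|lt_NM].
rewrite zsumS ?IHM // => j Mj; apply: F0; case/orP: Mj => ?; apply/orP; lia.
Qed.

Lemma zsum_shiftl N F : supported_in N F -> zsum N.+1 (fun j => F (j - 1)) = zsum N F.
Proof.
move=> F0; rewrite /zsum (_ : (2 * N.+1 = (2 * N).+2)%N); last lia.
rewrite !big_nat_recl //= F0; last by apply/orP; left; lia.
rewrite (F0 (_ - _)); last by apply/orP; left; lia.
by rewrite !add0r; apply: eq_bigr => k _; congr F; lia.
Qed.

Lemma zsum_shiftr N F : supported_in N F -> zsum N.+1 (fun j => F (j + 1)) = zsum N F.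
Proof.
move=> F0; rewrite /zsum (_ : (2 * N.+1 = (2 * N).+2)%N); last lia.
rewrite !big_nat_recr //= F0; last by apply/orP; right; lia.
rewrite (F0 (_ + _)); last by apply/orP; right; lia.
by rewrite !addr0; apply: eq_bigr => k _; congr F; lia.
Qed.

Lemma sum_nat_trunc (F : nat -> R) K L :
  (L < K)%N -> (forall M, (L < M)%N -> F M = 0) ->
  \sum_(0 <= a < K) F a = \sum_(0 <= M < L.+1) F M.
Proof.
move=> lt_LK F0; rewrite (big_cat_nat _ (n := L.+1)) //= [X in _ + X]big_nat_cond.
by rewrite [X in _ + X]big1 ?addr0 // => M /andP[/andP[lt_LM _] _]; apply: F0.
Qed.

End WindowSums.

Section QFactorial.
Variables (R : numFieldType) (p : R).

Lemma qpoch0 (a : R) : qpoch a p 0 = 1.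
Proof. by rewrite /qpoch big_ord0. Qed.

Lemma qpochS (a : R) n : qpoch a p n.+1 = qpoch a p n * (1 - a * p ^+ n).
Proof. by rewrite /qpoch big_ord_recr. Qed.

Lemma qfac0 : qfac p 0 = 1.
Proof. by rewrite /qfac /qpoch big_ord0. Qed.

Lemma qfacS n : qfac p n.+1 = qfac p n * (1 - p ^+ n.+1).
Proof. by rewrite /qfac /qpoch big_ord_recr /= exprS. Qed.

Lemma invqfac_neg (z : int) : z < 0 -> invqfac p z = 0.
Proof. by rewrite /invqfac => ->. Qed.

Lemma invqfac_ge0 (z : int) : 0 <= z -> invqfac p z = (qfac p `|z|)^-1.
Proof. by move=> z_ge0; rewrite /invqfac ltNge z_ge0. Qed.

Lemma invqfac_subn (m n : nat) :
  invqfac p (m%:Z - n%:Z) = if (n <= m)%N then (qfac p (m - n))^-1 else 0.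
Proof.
case: ifP => [le_nm|/negbT]; last by rewrite -ltnNge => ?; apply: invqfac_neg; lia.
by rewrite invqfac_ge0; [congr (qfac p _)^-1|]; lia.
Qed.

Lemma qbinom_out (A B : int) : ~~ ((0 <= B) && (B <= A)) -> qbinom p A B = 0.
Proof. by rewrite /qbinom => /negbTE ->. Qed.

Lemma qbinom_nat (n k : nat) :
  (k <= n)%N -> qbinom p n k = qfac p n / (qfac p k * qfac p (n - k)).
Proof. by move=> le_kn; rewrite /qbinom lez_nat le_kn /= subzn. Qed.

Lemma qbinom_sym (n : nat) (B : int) : qbinom p n B = qbinom p n (n%:Z - B).
Proof.
rewrite /qbinom.
have -> : ((0 <= n%:Z - B) && (n%:Z - B <= n%:Z)) = ((0 <= B) && (B <= n%:Z)).
  by apply/idP/idP => /andP[? ?]; apply/andP; split; lia.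
case: ifP => // _; rewrite (_ : n%:Z - (n%:Z - B) = B); last lia.
by rewrite [qfac p `|B| * _]mulrC.
Qed.

Lemma qbinom_expr_supp (x : R) (n : nat) (B : int) e1 e2 :
  ((0 <= B) && (B <= n%:Z) -> e1 = e2) ->
  x ^+ e1 * qbinom p n B = x ^+ e2 * qbinom p n B.
Proof.
move=> eq_e; case: (boolP ((0 <= B) && (B <= n%:Z))) => [/eq_e -> //|out].
by rewrite qbinom_out // !mulr0.
Qed.

Lemma sum_shift_invqfac (F : nat -> R) K L x :
  (L < K)%N -> (forall M, (L < M)%N -> F M = 0) ->
  \sum_(0 <= a < K) F (a + x)%N / qfac p a
  = \sum_(0 <= M < L.+1) F M * invqfac p (M%:Z - x%:Z).
Proof.
move=> lt_LK F0; have [lt_Lx|le_xL] := ltnP L x.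
  rewrite big_nat_cond big1 => [|a _]; last by rewrite F0 ?mul0r //; lia.
  rewrite big_nat_cond big1 // => M /andP[/andP[_ le_ML] _].
  by rewrite invqfac_neg ?mulr0 //; lia.
rewrite (sum_nat_trunc _ (L := L - x)); [|lia|by move=> M ?; rewrite F0 ?mul0r //; lia].
rewrite [RHS](big_cat_nat _ (n := x)) //=; last lia.
rewrite [X in X + _]big_nat_cond [X in X + _]big1 ?add0r; last first.
  by move=> M /andP[/andP[_ lt_Mx] _]; rewrite invqfac_neg ?mulr0 //; lia.
rewrite (big_addn 0 _ x) subSn //; apply: eq_big_nat => a _.
by rewrite invqfac_subn leq_addl addnK.
Qed.

Hypothesis hp : `|p| < 1.

Lemma subr1X_neq0 k : (0 < k)%N -> 1 - p ^+ k != 0.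
Proof.
move=> k_gt0; rewrite subr_eq0; apply/eqP => one_pk.
have : `|p ^+ k| < 1 by rewrite normrX exprn_ilt1 // -lt0n.
by rewrite -one_pk normr1 ltxx.
Qed.

Lemma qfac_neq0 n : qfac p n != 0.
Proof.
elim: n => [|n IHn]; first by rewrite qfac0 oner_eq0.
by rewrite qfacS mulf_neq0 // subr1X_neq0.
Qed.

Lemma qbinomS (n : nat) (B : int) :
  qbinom p n.+1 B = qbinom p n (B - 1) + p ^+ `|B| * qbinom p n B.
Proof.
have [B_lt0|B_ge0] := ltP B 0.
  by rewrite !qbinom_out ?mulr0 ?addr0 //; apply/negP => /andP[]; lia.
have [k ->] : exists k : nat, B = k by exists `|B|%N; lia.
rewrite absz_nat; case: k => [|k].
  rewrite (@qbinom_out n) ?add0r; last by apply/negP => /andP[]; lia.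
  by rewrite !qbinom_nat // !subn0 qfac0 expr0 !mul1r !divff ?qfac_neq0.
rewrite (_ : k.+1%:Z - 1 = k); last lia.
have [lt_nk1|le_k1n] := ltnP n k.+1.
  have [lt_nk|le_kn] := ltnP n k.
    by rewrite !qbinom_out ?mulr0 ?addr0 //; apply/negP => /andP[]; lia.
  have -> : k = n by lia.
  rewrite (@qbinom_out n n.+1) ?mulr0 ?addr0; last by apply/negP => /andP[]; lia.
  by rewrite !qbinom_nat // !subnn qfac0 !mulr1 !divff ?qfac_neq0.
have [m ->] : exists m, n = (m + k.+1)%N by exists (n - k.+1)%N; rewrite subnK.
rewrite !qbinom_nat; try lia.
rewrite (_ : ((m + k.+1).+1 - k.+1 = m.+1)%N); last lia.
rewrite (_ : ((m + k.+1) - k = m.+1)%N); last lia.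
rewrite (_ : ((m + k.+1) - k.+1 = m)%N); last lia.
rewrite !qfacS (_ : p ^+ (m + k.+1).+1 = p ^+ k.+1 * p ^+ m.+1); last first.
  by rewrite -exprD; congr (_ ^+ _); lia.
by field; rewrite !qfac_neq0 !(subr1X_neq0 (ltn0Sn _)).
Qed.

Lemma qbinomS_sym (n : nat) (B : int) :
  qbinom p n.+1 B = p ^+ `|n.+1%:Z - B| * qbinom p n (B - 1) + qbinom p n B.
Proof.
rewrite {1}qbinom_sym qbinomS [LHS]addrC.
by congr (_ * _ + _); rewrite qbinom_sym; congr qbinom; lia.
Qed.

Lemma qbinomSS (n : nat) (B : int) :
  qbinom p n.+2 B = (1 + p ^+ n.+1) * qbinom p n (B - 1) + p ^+ `|B| * qbinom p n B
                    + p ^+ `|n.+2%:Z - B| * qbinom p n (B - 2).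
Proof.
rewrite qbinomS !qbinomS_sym (_ : B - 1 - 1 = B - 2); last lia.
rewrite (_ : n.+1%:Z - (B - 1) = n.+2%:Z - B); last lia.
rewrite mulrDr mulrA -exprD.
rewrite (@qbinom_expr_supp p n (B - 1) (`|B| + `|n.+1%:Z - B|) n.+1); last first.
  by case/andP; lia.
ring.
Qed.

End QFactorial.

Section FfunCons.
Variables (V : nmodType) (K : nat).

Definition consf v (a : 'I_K) (n : {ffun 'I_v -> 'I_K}) : {ffun 'I_v.+1 -> 'I_K} :=
  [ffun i => if unlift ord0 i is Some j then n j else a].

Lemma sum_ffunS v (F : {ffun 'I_v.+1 -> 'I_K} -> V) :
  \sum_(n : {ffun 'I_v.+1 -> 'I_K}) F n =
  \sum_(a : 'I_K) \sum_(n : {ffun 'I_v -> 'I_K}) F (consf a n).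
Proof.
rewrite pair_big /= (reindex (fun x : 'I_K * {ffun 'I_v -> 'I_K} => consf x.1 x.2)) //.
exists (fun n : {ffun 'I_v.+1 -> 'I_K} => (n ord0, [ffun j : 'I_v => n (lift ord0 j)])).
  move=> [a n] _ /=; rewrite /consf ffunE unlift_none; congr pair.
  by apply/ffunP => j; rewrite !ffunE liftK.
move=> n _; apply/ffunP => i; rewrite /consf !ffunE.
by case: unliftP => [j ->|->]; rewrite ?ffunE.
Qed.

Definition tail_sum v (n : {ffun 'I_v -> 'I_K}) (i : nat) : nat :=
  \sum_(k < v | (i <= k)%N) n k.

Lemma tail_sum_cons0 v (a : 'I_K) (n : {ffun 'I_v -> 'I_K}) :
  tail_sum (consf a n) 0 = (a + tail_sum n 0)%N.
Proof.
rewrite /tail_sum !big_mkcond big_ord_recl /= /consf ffunE unlift_none; congr addn.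
by apply: eq_bigr => k _; rewrite ffunE liftK.
Qed.

Lemma tail_sum_consS v (a : 'I_K) (n : {ffun 'I_v -> 'I_K}) i :
  tail_sum (consf a n) i.+1 = tail_sum n i.
Proof.
rewrite /tail_sum !big_mkcond big_ord_recl /= add0n [RHS]big_mkcond.
by apply: eq_bigr => k _; rewrite /consf ffunE liftK /bump /= add1n ltnS.
Qed.

End FfunCons.

Section BaseIdentity.
Variables (R : numFieldType) (q : R).
Local Notation p := (q ^+ 2).

Lemma leg3_period_sum (j : int) : leg3 j + leg3 (j + 1) + leg3 (j + 2) = 0 :> R.
Proof.
rewrite /leg3 -(modzDml j 1) -(modzDml j 2).
have : (0 <= j %% 3)%Z /\ (j %% 3 < 3)%Z by split; [apply: modz_ge0 | apply: ltz_pmod].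
move: (j %% 3)%Z => r r_bnd.
have : r = 0 \/ r = 1 \/ r = 2 by lia.
by case=> [->|[->|->]] /=; rewrite ?addr0 ?add0r ?addrN ?addNr.
Qed.

Definition eps (j : int) : R := (-1) ^+ `|j| * leg3 (j + 1).

Lemma epsS (j : int) : eps (j + 1) = eps j - eps (j - 1).
Proof.
have sgnS (i : int) : (-1) ^+ absz (i + 1) = - (-1) ^+ absz i :> R.
  have [->|->] : absz (i + 1) = (absz i).+1 \/ absz i = (absz (i + 1)).+1 by lia.
    by rewrite exprS mulN1r.
  by rewrite exprS mulN1r opprK.
have := sgnS (j - 1); rewrite (_ : j - 1 + 1 = j); last lia.
move=> sgn_j; have := leg3_period_sum j; rewrite (_ : j + 2 = j + 1 + 1); last lia.
move=> period; rewrite /eps sgnS sgn_j (_ : j - 1 + 1 = j); last lia.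
rewrite -[leg3 (j + 1 + 1)]subr0 -period; ring.
Qed.

Definition wqbinom (L : nat) (j : int) : R :=
  q ^+ (`|j| * `|j|) * qbinom p (2 * L + 1)%N (L%:Z - j).

Lemma wqbinom_supported L (c : int -> R) : supported_in L.+1 (fun j => c j * wqbinom L j).
Proof.
move=> j out_j; rewrite /wqbinom qbinom_out ?mulr0 //.
by apply/negP => /andP[? ?]; move: out_j => /orP[]; lia.
Qed.

Hypothesis hq : `|q| < 1.

Lemma normqX2_lt1 : `|p| < 1.
Proof. by rewrite normrX exprn_ilt1. Qed.

Lemma wqbinomS L j :
  wqbinom L.+1 j = (1 + q ^+ (4 * L + 4)) * wqbinom L j
    + q ^+ (2 * L + 1) * wqbinom L (j - 1) + q ^+ (2 * L + 3) * wqbinom L (j + 1).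
Proof.
have shift_expr n B a b c d : ((0 <= B) && (B <= n%:Z) -> (a + b = c + d)%N) ->
    q ^+ a * (q ^+ b * qbinom p n B) = q ^+ c * (q ^+ d * qbinom p n B).
  by move=> eq_ab; rewrite !mulrA -!exprD; apply: qbinom_expr_supp.
rewrite /wqbinom (_ : (2 * L.+1 + 1 = (2 * L + 1).+2)%N); last lia.
rewrite qbinomSS; last exact: normqX2_lt1.
rewrite -!exprM (_ : (2 * (2 * L + 1).+1 = 4 * L + 4)%N); last lia.
rewrite (_ : L.+1%:Z - j - 1 = L%:Z - j); last lia.
rewrite (_ : L.+1%:Z - j - 2 = L%:Z - (j + 1)); last lia.
rewrite (_ : L.+1%:Z - j = L%:Z - (j - 1)); last lia.
rewrite !mulrDr.
rewrite (shift_expr _ (L%:Z - (j - 1)) _ _ (2 * L + 1)%N (`|(j - 1)%R| * `|(j - 1)%R|)%N).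
  rewrite (shift_expr _ (L%:Z - (j + 1)) _ _ (2 * L + 3)%N (`|(j + 1)%R| * `|(j + 1)%R|)%N).
    by ring.
  all: by case/andP; nia.
Qed.

Lemma zsum_wqbinomS L (c : int -> R) :
  zsum L.+2 (fun j => c j * wqbinom L.+1 j) =
    (1 + q ^+ (4 * L + 4)) * zsum L.+1 (fun j => c j * wqbinom L j)
    + q ^+ (2 * L + 1) * zsum L.+1 (fun j => c (j + 1) * wqbinom L j)
    + q ^+ (2 * L + 3) * zsum L.+1 (fun j => c (j - 1) * wqbinom L j).
Proof.
rewrite -(zsum_shiftl (@wqbinom_supported L (fun j => c (j + 1)))).
rewrite -(zsum_shiftr (@wqbinom_supported L (fun j => c (j - 1)))).
rewrite -(zsumS (@wqbinom_supported L c)) -!zsumZ -!zsumD.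
apply: eq_zsum => j; rewrite wqbinomS (_ : j - 1 + 1 = j); last lia.
by rewrite (_ : j + 1 - 1 = j); [ring|lia].
Qed.

Definition eps_sum L := zsum L.+1 (fun j => eps j * wqbinom L j).
Definition eps_sum_shift L := zsum L.+1 (fun j => eps (j - 1) * wqbinom L j).
Definition trinom_prod L := \prod_(k < L) (1 + q ^+ (2 * k + 1) + q ^+ (4 * k + 2)).

Lemma eps_sumS L : eps_sum L.+1 = (1 + q ^+ (4 * L + 4)) * eps_sum L
  + q ^+ (2 * L + 1) * (eps_sum L - eps_sum_shift L) + q ^+ (2 * L + 3) * eps_sum_shift L.
Proof.
rewrite /eps_sum zsum_wqbinomS; congr (_ + _ * _ + _ * _).
by rewrite -zsumB; apply: eq_zsum => j; rewrite epsS mulrBl.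
Qed.

Lemma eps_sum_shiftS L : eps_sum_shift L.+1 = (1 + q ^+ (4 * L + 4)) * eps_sum_shift L
  + q ^+ (2 * L + 1) * eps_sum L + q ^+ (2 * L + 3) * (eps_sum_shift L - eps_sum L).
Proof.
rewrite /eps_sum_shift zsum_wqbinomS; congr (_ + _ * _ + _ * _).
  by apply: eq_zsum => j; rewrite (_ : j + 1 - 1 = j) //; lia.
rewrite -zsumB; apply: eq_zsum => j.
have := epsS (j - 1); rewrite (_ : j - 1 + 1 = j); last lia.
rewrite (_ : j - 1 - 1 = j - 2); last lia.
by move=> epsj; rewrite -mulrBl epsj opprB addrCA subrr addr0.
Qed.

Lemma eps_sum_closed L :
  eps_sum L = trinom_prod L /\ eps_sum_shift L = - q ^+ (2 * L + 1) * trinom_prod L.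
Proof.
elim: L => [|L [IHsum IHshift]].
  have qbinom1 (k : nat) : (k <= 1)%N -> qbinom p 1 k = 1.
    by case: k => [|[|]] // _;
      rewrite qbinom_nat // qfac0 ?mul1r ?mulr1 divff ?qfac_neq0 ?normqX2_lt1.
  rewrite /eps_sum /eps_sum_shift /trinom_prod big_ord0 !zsum1 /wqbinom /= !qbinom1 //.
  by rewrite /eps /leg3 /=; split; ring.
rewrite eps_sumS eps_sum_shiftS IHsum IHshift /trinom_prod big_ord_recr /= -/(trinom_prod L).
set Q := q ^+ (2 * L + 1).
have -> : q ^+ (4 * L + 4) = Q * Q * q ^+ 2 by rewrite -!exprD; congr (_ ^+ _); lia.
have -> : q ^+ (2 * L + 3) = Q * q ^+ 2 by rewrite -!exprD; congr (_ ^+ _); lia.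
have -> : q ^+ (4 * L + 2) = Q * Q by rewrite -!exprD; congr (_ ^+ _); lia.
have -> : q ^+ (2 * L.+1 + 1) = Q * q ^+ 2 by rewrite -!exprD; congr (_ ^+ _); lia.
by split; ring.
Qed.

End BaseIdentity.

Section BaileyLemma.
Variables (R : numFieldType) (p : R).

Definition bailey_den (L : nat) (j : int) : R :=
  invqfac p (L%:Z - j) * invqfac p (L%:Z + j + 1).

Lemma qbinom_bailey_den (L : nat) (j : int) :
  qbinom p (2 * L + 1)%N (L%:Z - j) = qfac p (2 * L + 1) * bailey_den L j.
Proof.
have [in_j|out_j] := boolP ((0 <= L%:Z - j) && (L%:Z - j <= (2 * L + 1)%N%:Z)).
  rewrite /qbinom in_j /bailey_den !invqfac_ge0; [|lia|lia].
  by rewrite (_ : (2 * L + 1)%N%:Z - (L%:Z - j) = L%:Z + j + 1) ?invfM //; lia.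
rewrite qbinom_out // /bailey_den.
have : (L%:Z - j < 0) \/ (L%:Z + j + 1 < 0).
  by move: out_j; rewrite negb_and -!ltNge => /orP[]; lia.
by case=> /invqfac_neg ->; rewrite ?mul0r ?mulr0.
Qed.

Lemma bailey_den_supported (L : nat) (c : int -> R) :
  supported_in L.+1 (fun j => c j * bailey_den L j).
Proof.
move=> j /orP[] out_j; rewrite /bailey_den.
  by rewrite (@invqfac_neg _ p (L%:Z + j + 1)) ?mulr0 //; lia.
by rewrite (@invqfac_neg _ p (L%:Z - j)) ?mul0r ?mulr0 //; lia.
Qed.

Hypothesis hp : `|p| < 1.

Lemma sum_qbinom_qpower t c :
  \sum_(0 <= s < t.+1) qbinom p t s * p ^+ (s * s + c * s) * (qfac p (c + t) / qfac p (c + s))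
  = 1.
Proof.
elim: t c => [|t IHt] c.
  rewrite big_nat1 qbinom_nat // !(subnn, addn0, muln0, qfac0, expr0, invr1, mul1r).
  by rewrite divff ?qfac_neq0.
under eq_big_nat => s _ do rewrite qbinomS // mulrDl mulrDl.
rewrite big_split /= [X in X + _]big_nat_recl // [X in _ + X]big_nat_recr //=.
rewrite (@qbinom_out _ _ t (0 - 1)); last by apply/negP => /andP[]; lia.
rewrite (@qbinom_out _ _ t t.+1); last by apply/negP => /andP[]; lia.
rewrite !mulr0 !mul0r add0r addr0 -big_split /= -[RHS](IHt c.+1).
apply: eq_big_nat => s _; rewrite (_ : s.+1%:Z - 1 = s); last lia.
rewrite (_ : (c.+1 + t = c + t.+1)%N); last by rewrite addSn addnS.
rewrite (addSn c s) (addnS c s) (qfacS _ (c + s)).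
rewrite (_ : p ^+ (s.+1 * s.+1 + c * s.+1) = p ^+ s * p ^+ (s * s + c * s) * p ^+ (c + s).+1);
  last by rewrite -!exprD; congr (_ ^+ _); nia.
rewrite (_ : p ^+ (s * s + c.+1 * s) = p ^+ s * p ^+ (s * s + c * s));
  last by rewrite -!exprD; congr (_ ^+ _); nia.
by field; rewrite (qfac_neq0 hp) (subr1X_neq0 hp (ltn0Sn _)).
Qed.

Lemma sum_qpower_invqfac t c :
  \sum_(0 <= s < t.+1) p ^+ (s * s + c * s) / (qfac p s * qfac p (t - s) * qfac p (c + s))
  = (qfac p t * qfac p (c + t))^-1.
Proof.
have qfacs_neq0 : qfac p t * qfac p (c + t) != 0 by rewrite mulf_neq0 ?qfac_neq0.
apply: (mulfI qfacs_neq0); rewrite mulfV // -[RHS](sum_qbinom_qpower t c) mulr_sumr.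
apply: eq_big_nat => s s_le; rewrite qbinom_nat; last lia.
by field; rewrite !(qfac_neq0 hp).
Qed.

Lemma bailey_lemma_nat (L m : nat) :
  \sum_(0 <= M < L.+1) p ^+ (M * M.+1) * invqfac p (L%:Z - M%:Z) * bailey_den M m
  = p ^+ (m * m.+1) * bailey_den L m.
Proof.
have den0 M : (M < m)%N -> bailey_den M m = 0.
  by move=> lt_Mm; rewrite /bailey_den invqfac_neg ?mul0r //; lia.
have [lt_Lm|le_mL] := ltnP L m.
  rewrite den0 // mulr0 big_nat_cond big1 // => M /andP[/andP[_ le_ML] _].
  by rewrite den0 ?mulr0 //; lia.
rewrite (big_cat_nat _ (n := m)) //=; last lia.
rewrite big_nat_cond big1 ?add0r; last first.
  by move=> M /andP[/andP[_ lt_Mm] _]; rewrite den0 ?mulr0.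
have [t ->] : exists t, L = (m + t)%N by exists (L - m)%N; lia.
rewrite (big_addn 0 _ m) (_ : ((m + t).+1 - m = t.+1)%N); last lia.
have denE M : (m <= M)%N -> bailey_den M m = (qfac p (M - m) * qfac p (2 * m + 1 + (M - m)))^-1.
  move=> le_mM; rewrite /bailey_den !invqfac_ge0; [|lia|lia].
  by rewrite invfM; congr ((qfac p _)^-1 * (qfac p _)^-1); lia.
rewrite denE ?leq_addr // addKn -sum_qpower_invqfac mulr_sumr.
apply: eq_big_nat => s s_le; rewrite denE ?leq_addl // addnK invqfac_subn.
rewrite ifT; last lia.
rewrite (_ : (m + t - (s + m) = t - s)%N); last lia.
rewrite (_ : ((s + m) * (s + m).+1 = m * m.+1 + (s * s + (2 * m + 1) * s))%N); last nia.
rewrite exprD !invfM; ring.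
Qed.

Lemma bailey_lemma (L : nat) (j : int) :
  \sum_(0 <= M < L.+1) p ^+ (M * M.+1) * invqfac p (L%:Z - M%:Z) * bailey_den M j
  = p ^+ (`|j| * `|(j + 1)%R|)%N * bailey_den L j.
Proof.
case: j => m; first by rewrite bailey_lemma_nat (_ : `|(m%:Z + 1)%R|%N = m.+1) //; lia.
have den_sym M : bailey_den M (Negz m) = bailey_den M m.
  by rewrite /bailey_den mulrC; congr (invqfac p _ * invqfac p _); lia.
under eq_big_nat => M _ do rewrite den_sym.
rewrite bailey_lemma_nat den_sym (_ : `|Negz m|%N = m.+1) //.
rewrite (_ : `|(Negz m + 1)%R|%N = m); last lia.
by rewrite mulnC.
Qed.

End BaileyLemma.

Section BaileyChain.
Variables (R : numFieldType) (q : R).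
Local Notation p := (q ^+ 2).

(* For every integer j, [|j| * |j + 1|] is j(j+1): the exponent below is
   (2v+1)j^2 + 2vj (see alphaE), written as a natural number. *)
Definition alpha (v : nat) (j : int) : R :=
  (-1) ^+ `|j| * q ^+ (`|j| * `|j| + 2 * v * (`|j| * `|(j + 1)%R|)) * leg3 (j + 1).

Lemma alphaE v j :
  alpha v j = (-1) ^+ `|j| * q ^ ((2 * v + 1)%:Z * j ^+ 2 + (2 * v)%:Z * j) * leg3 (j + 1).
Proof.
suff -> : (2 * v + 1)%:Z * j ^+ 2 + (2 * v)%:Z * j
          = (`|j| * `|j| + 2 * v * (`|j| * `|(j + 1)%R|))%N%:Z by rewrite -exprnP.
rewrite expr2; case: j => m.
  by rewrite (_ : `|(m%:Z + 1)%R|%N = m.+1) ?absz_nat; [nia|lia].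
by rewrite (_ : `|(Negz m + 1)%R|%N = m) ?NegzE; [nia|lia].
Qed.

Lemma alphaS v j : alpha v.+1 j = alpha v j * p ^+ (`|j| * `|(j + 1)%R|)%N.
Proof.
set X := (`|j| * `|(j + 1)%R|)%N.
rewrite /alpha -exprM (_ : (`|j| * `|j| + 2 * v.+1 * X = `|j| * `|j| + 2 * v * X + 2 * X)%N).
  by rewrite exprD; ring.
lia.
Qed.

Definition beta0 (L : nat) : R :=
  qpoch (q ^+ 3) (q ^+ 6) L / qpoch q (q ^+ 2) L / qfac p L.*2.+1.

Fixpoint beta (v L : nat) : R :=
  if v is v'.+1 then
    \sum_(0 <= M < L.+1) p ^+ (M * M.+1) * invqfac p (L%:Z - M%:Z) * beta v' M
  else beta0 L.

Lemma betaS v L :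
  beta v.+1 L = \sum_(0 <= M < L.+1) p ^+ (M * M.+1) * invqfac p (L%:Z - M%:Z) * beta v M.
Proof. by []. Qed.

Lemma qpoch_cube n : qpoch (q ^+ 3) (q ^+ 6) n = qpoch q (q ^+ 2) n * trinom_prod q n.
Proof.
elim: n => [|n IHn]; first by rewrite !qpoch0 /trinom_prod big_ord0 mulr1.
rewrite !qpochS IHn /trinom_prod big_ord_recr /= -/(trinom_prod q n).
set Q := q ^+ (2 * n + 1).
have -> : q ^+ 3 * q ^+ 6 ^+ n = Q * Q * Q by rewrite -exprM -!exprD; congr (_ ^+ _); lia.
have -> : q * q ^+ 2 ^+ n = Q by rewrite -exprM -exprS; congr (_ ^+ _); lia.
have -> : q ^+ (4 * n + 2) = Q * Q by rewrite -!exprD; congr (_ ^+ _); lia.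
ring.
Qed.

Hypothesis hq : `|q| < 1.

Lemma qpoch_odd_neq0 n : qpoch q (q ^+ 2) n != 0.
Proof.
elim: n => [|n IHn]; first by rewrite qpoch0 oner_neq0.
by rewrite qpochS mulf_neq0 // -exprM -exprS subr1X_neq0.
Qed.

Lemma bailey_pair0 L : zsum L.+1 (fun j => alpha 0 j * bailey_den p L j) = beta0 L.
Proof.
have qfacL_neq0 := qfac_neq0 (normqX2_lt1 hq) (2 * L + 1).
apply: (mulfI qfacL_neq0); rewrite -zsumZ.
have -> : zsum L.+1 (fun j => qfac p (2 * L + 1) * (alpha 0 j * bailey_den p L j))
          = eps_sum q L.
  apply: eq_zsum => j; rewrite /wqbinom qbinom_bailey_den /alpha /eps muln0 mul0n addn0.
  by ring.
rewrite (eps_sum_closed hq L).1 /beta0 qpoch_cube (_ : (L.*2.+1 = 2 * L + 1)%N); last lia.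
by field; rewrite qfacL_neq0 qpoch_odd_neq0.
Qed.

Lemma bailey_pair v L : zsum L.+1 (fun j => alpha v j * bailey_den p L j) = beta v L.
Proof.
elim: v L => [|v IHv] L; first exact: bailey_pair0.
rewrite betaS.
transitivity (\sum_(0 <= M < L.+1) \sum_(0 <= k < 2 * L.+1)
   p ^+ (M * M.+1) * invqfac p (L%:Z - M%:Z) *
   (alpha v (k%:Z - L.+1%:Z) * bailey_den p M (k%:Z - L.+1%:Z))); last first.
  apply: eq_big_nat => M le_ML.
  rewrite -IHv -(@zsum_widen _ M.+1 L.+1); [|exact: bailey_den_supported|lia].
  by rewrite /zsum mulr_sumr.
rewrite exchange_big_nat /zsum; apply: eq_bigr => k _.
rewrite alphaS -mulrA -(bailey_lemma (normqX2_lt1 hq)) mulr_sumr; apply: eq_bigr => M _.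
by rewrite mulrCA.
Qed.

End BaileyChain.

Section MultiSum.
Variables (R : numFieldType) (q : R).
Local Notation p := (q ^+ 2).

Definition beta_ratio (m : nat) : R := qpoch (q ^+ 3) (q ^+ 6) m / qpoch q (q ^+ 2) m.

Definition multisum_term v K (n : {ffun 'I_v -> 'I_K}) : R :=
  p ^+ (\sum_(i < v) tail_sum n i * (tail_sum n i).+1)%N
  / (\prod_(i < v) qfac p (if (i : nat) == v.-1 then (n i : nat).*2.+1 else n i))
  * (\prod_(i < v | (i : nat) == v.-1) beta_ratio (n i)).

Lemma multisum_term1 K (a : 'I_K) (n : {ffun 'I_0 -> 'I_K}) :
  multisum_term (consf a n) = p ^+ (a * a.+1) * beta0 q a.
Proof.
rewrite /multisum_term !big_ord1 big_mkcond big_ord1 /= tail_sum_cons0 /tail_sum big_ord0.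
by rewrite addn0 /consf ffunE unlift_none /beta0 /beta_ratio; ring.
Qed.

Lemma multisum_term_cons v K (a : 'I_K) (n : {ffun 'I_v.+1 -> 'I_K}) :
  multisum_term (consf a n) =
    p ^+ ((a + tail_sum n 0) * (a + tail_sum n 0).+1) / qfac p a * multisum_term n.
Proof.
have consf_lift (i : 'I_v.+1) : consf a n (lift ord0 i) = n i by rewrite /consf ffunE liftK.
have exp_cons : (\sum_(i < v.+2) tail_sum (consf a n) i * (tail_sum (consf a n) i).+1 =
    (a + tail_sum n 0) * (a + tail_sum n 0).+1
    + \sum_(i < v.+1) tail_sum n i * (tail_sum n i).+1)%N.
  by rewrite big_ord_recl tail_sum_cons0; congr addn; apply: eq_bigr => i _; rewrite tail_sum_consS.
have den_cons : \prod_(i < v.+2) qfac p (if (i : nat) == v.+1 then (consf a n i : nat).*2.+1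
      else consf a n i)
    = qfac p a * \prod_(i < v.+1) qfac p (if (i : nat) == v then (n i : nat).*2.+1 else n i).
  rewrite big_ord_recl /= /consf ffunE unlift_none -/(consf a n); congr (_ * _).
  by apply: eq_bigr => i _; rewrite consf_lift.
have ratio_cons : \prod_(i < v.+2 | (i : nat) == v.+1) beta_ratio (consf a n i) =
    \prod_(i < v.+1 | (i : nat) == v) beta_ratio (n i).
  rewrite big_mkcond [RHS]big_mkcond big_ord_recl /= mul1r.
  by apply: eq_bigr => i _; rewrite consf_lift.
rewrite /multisum_term /= exp_cons den_cons ratio_cons exprD invfM; ring.
Qed.

Lemma multisum_beta w K L : (L < K)%N ->
  \sum_(n : {ffun 'I_w.+1 -> 'I_K}) multisum_term n * invqfac p (L%:Z - (tail_sum n 0)%:Z)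
  = beta q w.+1 L.
Proof.
pose F L M := p ^+ (M * M.+1) * invqfac p (L%:Z - M%:Z).
have F0 L' M : (L' < M)%N -> F L' M = 0.
  by move=> lt_LM; rewrite /F invqfac_neg ?mulr0 //; lia.
(* Peel off n_1 and re-index the n_1-sum by M = N_1 = n_1 + N_2. *)
elim: w K L => [|w IHw] K L lt_LK; rewrite sum_ffunS.
  transitivity (\sum_(0 <= a < K) F L a * beta0 q a).
    rewrite big_mkord; apply: eq_bigr => a _.
    rewrite (eq_bigr (fun _ => F L a * beta0 q a)) => [|n _].
      by rewrite sumr_const card_ffun !card_ord expn0 mulr1n.
    by rewrite multisum_term1 tail_sum_cons0 /tail_sum big_ord0 addn0 mulrAC.
  by rewrite betaS; apply: sum_nat_trunc => // M /F0 ->; rewrite mul0r.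
transitivity (\sum_(n : {ffun 'I_w.+1 -> 'I_K})
    multisum_term n * \sum_(0 <= a < K) F L (a + tail_sum n 0)%N / qfac p a).
  rewrite exchange_big /=; apply: eq_bigr => n _.
  rewrite big_mkord mulr_sumr; apply: eq_bigr => a _.
  by rewrite multisum_term_cons tail_sum_cons0 /F; ring.
under eq_bigr => n _ do rewrite (sum_shift_invqfac p _ lt_LK (F0 L)) mulr_sumr.
rewrite betaS exchange_big; apply: eq_big_nat => M le_ML.
rewrite -(IHw K M); last lia.
by rewrite mulr_sumr; apply: eq_bigr => n _; rewrite mulrCA.
Qed.

End MultiSum.

Theorem mainTheorem15 (R : numFieldType) (q : R) (v L : nat) :
  `|q| < 1 -> (0 < v)%N ->
  let qt := q ^+ 2 in
  \sum_(n : {ffun 'I_v -> 'I_L.+1})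
     (let N := fun i : nat => (\sum_(k < v | (i <= k)%N) (n k : nat))%N in
      qt ^+ (\sum_(i < v) N i * (N i).+1)%N
      / (\prod_(i < v) qfac qt (if (i : nat) == v.-1 then (n i).*2.+1 else n i))
      * (\prod_(i < v | (i : nat) == v.-1)
            (qpoch (q ^+ 3) (q ^+ 6) (n i) / qpoch q (q ^+ 2) (n i)))
      * (qfac qt (2 * L + 1) * invqfac qt (L%:Z - (N 0%N)%:Z)))
  = \sum_(k < (2 * L + 2)%N)
      (let j : int := k%:Z - (L.+1)%:Z in
       (-1) ^+ `|j|%N * q ^ ((2 * v + 1)%:Z * j ^+ 2 + (2 * v)%:Z * j)
       * leg3 (j + 1) * qbinom qt (2 * L + 1)%:Z (L%:Z - j)).
Proof.
move=> hq; case: v => // w _ qt.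
transitivity (qfac qt (2 * L + 1) * beta q w.+1 L).
  rewrite -(multisum_beta q w (ltnSn L)) mulr_sumr; apply: eq_bigr => n _.
  by rewrite /multisum_term /tail_sum /beta_ratio; ring.
rewrite -(bailey_pair hq) /zsum (_ : (2 * L.+1 = 2 * L + 2)%N); last lia.
rewrite big_mkord mulr_sumr.
by apply: eq_bigr => k _; rewrite /= -alphaE qbinom_bailey_den mulrCA.
Qed.
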